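(* Let $S^1_\infty=\mathbb{R}\cup\{\infty\}$ with the projective action of $\mathrm{PSL}(2,\mathbb{R})$, and let $x\partial_x$ denote the smooth vector field on $S^1_\infty$ extending $x\partial_x\in\mathfrak{X}(\mathbb{R})$. If $Z\in\mathfrak{X}(S^1_\infty)$ is invariant by some hyperbolic element whose fixed point set is $\{0,\infty\}$, then $Z=\varkappa\,x\partial_x$ for some $\varkappa\in\mathbb{R}$. In particular, if $H\subset\mathrm{PSL}(2,\mathbb{R})$ is a subgroup containing at least one hyperbolic element, and consisting of the identity, hyperbolic elements with fixed point set $\{0,\infty\}$ and possibly elliptic elements leaving $\{0,\infty\}$ invariant, then the space $\mathfrak{X}(S^1_\infty,H)$ of $H$-invariant vector fields equals $\mathbb{R}\,x\partial_x$ if $H$ has no elliptic element, and equals $0$ otherwise.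
   Context: An element of $\mathrm{PSL}(2,\mathbb{R})$, acting on $S^1_\infty$ by $x\mapsto(ax+b)/(cx+d)$, is hyperbolic if it has exactly two fixed points in $S^1_\infty$, and elliptic if it has none. *)

From Stdlib Require Import Reals.
From Coquelicot Require Import Coquelicot.
Open Scope R_scope.

(** Points of S^1_infty = R ∪ {∞}: [Some x] is the real point x, [None] is ∞. *)
Definition S1inf := option R.

(** Elements of PSL(2,R) are represented by matrices (a,b,c,d) with ad-bc = 1
    (the sign ambiguity is irrelevant for the action). *)
Definition mat := (R * R * R * R)%type.
Definition det1 (m : mat) : Prop :=
  let '(a, b, c, d) := m in a * d - b * c = 1.
Definition mat_id : mat := (1, 0, 0, 1).
Definition mat_mul (m n : mat) : mat :=
  let '(a, b, c, d) := m in let '(a', b', c', d') := n in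
  (a * a' + b * c', a * b' + b * d', c * a' + d * c', c * b' + d * d').
Definition mat_inv (m : mat) : mat :=
  let '(a, b, c, d) := m in (d, - b, - c, a).

Definition act (m : mat) (p : S1inf) : S1inf :=
  let '(a, b, c, d) := m in
  match p with
  | Some x => if Req_EM_T (c * x + d) 0 then None
              else Some ((a * x + b) / (c * x + d))
  | None => if Req_EM_T c 0 then None else Some (a / c)
  end.

Definition fixed (m : mat) (p : S1inf) : Prop := act m p = p.

Definition hyperbolic (m : mat) : Prop :=
  exists p q : S1inf, p <> q /\ forall r, fixed m r <-> (r = p \/ r = q).
Definition elliptic (m : mat) : Prop := forall p, ~ fixed m p.

(** A vector field Z on S^1_infty is given by its expressions in the two
    standard charts: Z = fx(x) ∂_x on the chart x ∈ R, and Z = fy(y) ∂_y on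
    the chart y = 1/x around ∞.  Z is smooth iff fx, fy are C^∞ on R and they
    agree on the overlap: since ∂_x = -y^2 ∂_y there,
    fy(y) = - y^2 fx(1/y) for y <> 0. *)
Definition smooth (f : R -> R) : Prop := forall (n : nat) (x : R), ex_derive_n f n x.

Definition is_vf (fx fy : R -> R) : Prop :=
  smooth fx /\ smooth fy /\ forall y, y <> 0 -> fy y = - (y ^ 2 * fx (/ y)).

(** Invariance of Z under m : phi_* Z = Z, i.e. Z(phi p) = dphi_p (Z p) for
    every point p, written in the charts (derivatives of the chart
    expressions of phi computed using ad - bc = 1):
    - p = x finite, phi p finite (cx+d<>0): x' = (ax+b)/(cx+d), dx'/dx = 1/(cx+d)^2;
    - p = x finite, phi p = ∞ (cx+d=0): y' = (cx+d)/(ax+b), dy'/dx = -1/(ax+b)^2;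
    - p = ∞, c <> 0: x' = (a+by)/(c+dy), dx'/dy at y=0 is -1/c^2;
    - p = ∞, c = 0: y' = dy/(a+by), dy'/dy at y=0 is d/a = d^2. *)
Definition vf_invariant (m : mat) (fx fy : R -> R) : Prop :=
  let '(a, b, c, d) := m in
  (forall x, c * x + d <> 0 ->
     fx ((a * x + b) / (c * x + d)) = fx x / (c * x + d) ^ 2) /\
  (forall x, c * x + d = 0 -> fy 0 = - (fx x / (a * x + b) ^ 2)) /\
  (c <> 0 -> fx (a / c) = - (fy 0 / c ^ 2)) /\
  (c = 0 -> fy 0 = d ^ 2 * fy 0).

(** Subgroups of PSL(2,R), given by (a subgroup of) their matrix lifts. *)
Definition subgroup (H : mat -> Prop) : Prop :=
  (forall m, H m -> det1 m) /\ H mat_id /\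
  (forall m n, H m -> H n -> H (mat_mul m n)) /\
  (forall m, H m -> H (mat_inv m)).

(** The identity of PSL(2,R) = matrices acting trivially (±I). *)
Definition is_identity (m : mat) : Prop := forall p, act m p = p.

Definition zero_inf (p : S1inf) : Prop := p = Some 0 \/ p = None.

From Stdlib Require Import Reals Lra.
From Coquelicot Require Import Coquelicot.
Open Scope R_scope.

(* A hyperbolic element fixing 0 and ∞ is x |-> a^2 x with a^2 <> 1, and
   its invariance makes the chart expression fx homogeneous:
   fx (a^2 x) = a^2 fx x.  Iterating the contraction (a^2 or a^-2) pushes
   any x towards 0, where the difference quotient of fx tends to fx'(0);
   since fx x / x is constant along the orbit, fx x = fx'(0) x.  An elliptic
   element preserving {0, ∞} must swap them, i.e. is x |-> -1/(c^2 x), and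
   this reverses the sign of x∂_x, so only the zero field survives. *)

Definition x_dx_multiple (k : R) (fx fy : R -> R) : Prop :=
  (forall x, fx x = k * x) /\ (forall y, fy y = - (k * y)).

Lemma contracting_homogeneous_linear (f : R -> R) (mu l : R) :
  0 < mu < 1 -> (forall x, f (mu * x) = mu * f x) ->
  derivable_pt_lim f 0 l -> forall x, f x = l * x.
Proof.
  intros Hmu Hf Hd.
  assert (f0 : f 0 = 0) by (specialize (Hf 0); rewrite Rmult_0_r in Hf; nra).
  assert (Hpow : forall n x, f (mu ^ n * x) = mu ^ n * f x).
  { induction n as [|n IH]; intro x; simpl; [now rewrite !Rmult_1_l|].
    rewrite Rmult_assoc, Hf, IH; ring. }
  intro x; destruct (Req_dec x 0) as [->|Hx]; [rewrite f0; ring|].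
  destruct (Req_dec (f x / x) l) as [Hq|Hq].
  { rewrite <- Hq; field; exact Hx. }
  exfalso.
  assert (Heps : 0 < Rabs (f x / x - l)) by (apply Rabs_pos_lt; lra).
  destruct (Hd _ Heps) as [delta Hdelta].
  assert (Hax : 0 < Rabs x) by (apply Rabs_pos_lt; exact Hx).
  destruct (pow_lt_1_zero mu) with (y := delta / Rabs x) as [N HN].
  { rewrite Rabs_pos_eq; lra. }
  { apply Rdiv_lt_0_compat; [apply cond_pos | exact Hax]. }
  specialize (HN N (le_n N)).
  assert (HmuN : mu ^ N <> 0) by (apply pow_nonzero; lra).
  assert (Hsmall : Rabs (mu ^ N * x) < delta).
  { rewrite Rabs_mult.
    apply Rmult_lt_compat_r with (r := Rabs x) in HN; [|exact Hax].
    unfold Rdiv in HN; rewrite Rmult_assoc, Rinv_l, Rmult_1_r in HN; lra. }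
  specialize (Hdelta (mu ^ N * x) (Rmult_integral_contrapositive _ _ (conj HmuN Hx)) Hsmall).
  rewrite Rplus_0_l, Hpow, f0 in Hdelta.
  replace ((mu ^ N * f x - 0) / (mu ^ N * x)) with (f x / x) in Hdelta
    by (field; split; assumption).
  lra.
Qed.

Lemma homogeneous_smooth_linear (f : R -> R) (lam : R) :
  0 < lam -> lam <> 1 -> (forall x, f (lam * x) = lam * f x) ->
  smooth f -> exists k, forall x, f x = k * x.
Proof.
  intros Hpos Hne1 Hf Hsmooth.
  destruct (Hsmooth 1%nat 0) as [l Hl]; apply is_derive_Reals in Hl.
  exists l.
  destruct (Rlt_dec lam 1) as [Hlt|Hge].
  - apply (contracting_homogeneous_linear f lam); [lra | exact Hf | exact Hl].
  - apply (contracting_homogeneous_linear f (/ lam)); [|intro x | exact Hl].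
    + split; [apply Rinv_0_lt_compat; lra|].
      rewrite <- Rinv_1; apply Rinv_lt_contravar; lra.
    + specialize (Hf (/ lam * x)).
      replace (lam * (/ lam * x)) with x in Hf by (field; lra).
      rewrite Hf; field; lra.
Qed.

Lemma fixed_zero_inf_diag (a b c d : R) :
  fixed (a, b, c, d) (Some 0) -> fixed (a, b, c, d) None ->
  b = 0 /\ c = 0 /\ d <> 0.
Proof.
  unfold fixed; simpl.
  destruct (Req_EM_T (c * 0 + d) 0) as [_|Hd]; [discriminate|].
  destruct (Req_EM_T c 0) as [Hc|]; [|discriminate].
  intros H0 _; injection H0 as H0; subst c.
  replace (0 * 0 + d) with d in Hd, H0 by ring.
  replace (a * 0 + b) with b in H0 by ring.
  assert (Eb : b = b / d * d) by (field; exact Hd).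
  rewrite H0 in Eb; split; [lra | split; [reflexivity | exact Hd]].
Qed.

Lemma swap_zero_inf_antidiag (a b c d : R) :
  act (a, b, c, d) (Some 0) = None -> act (a, b, c, d) None = Some 0 ->
  a = 0 /\ d = 0 /\ c <> 0.
Proof.
  simpl.
  destruct (Req_EM_T (c * 0 + d) 0) as [Hd|]; [|discriminate].
  destruct (Req_EM_T c 0) as [|Hc]; [discriminate|].
  intros _ Ha; injection Ha as Ha.
  assert (Ea : a = a / c * c) by (field; exact Hc).
  rewrite Ha in Ea; split; [|split]; [lra | lra | exact Hc].
Qed.

Lemma diag_fixes_one (a d : R) :
  a * d = 1 -> a ^ 2 = 1 -> fixed (a, 0, 0, d) (Some 1).
Proof.
  intros Had Ha2.
  assert (Hda : d = a) by nra; subst d.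
  unfold fixed; simpl.
  destruct (Req_EM_T (0 * 1 + a) 0); [exfalso; nra|].
  f_equal; field; nra.
Qed.

Lemma vf_invariant_diag (a d : R) (fx fy : R -> R) :
  a * d = 1 -> vf_invariant (a, 0, 0, d) fx fy ->
  (forall x, fx (a ^ 2 * x) = a ^ 2 * fx x) /\ fy 0 = d ^ 2 * fy 0.
Proof.
  intros Had [Hx [_ [_ Hinf]]]; split; [intro x|exact (Hinf eq_refl)].
  assert (Hd : d <> 0) by (intro; subst d; lra).
  assert (Ha : a = / d) by (apply (Rmult_eq_reg_r d); [rewrite Rinv_l|]; assumption).
  specialize (Hx x); subst a.
  replace (0 * x + d) with d in Hx by ring.
  replace ((/ d * x + 0) / d) with ((/ d) ^ 2 * x) in Hx by (field; exact Hd).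
  rewrite (Hx Hd); field; exact Hd.
Qed.

Lemma zero_inf_fixed_x_dx_multiple (m : mat) (fx fy : R -> R) :
  det1 m -> (forall p, fixed m p <-> zero_inf p) ->
  is_vf fx fy -> vf_invariant m fx fy -> exists k, x_dx_multiple k fx fy.
Proof.
  destruct m as [[[a b] c] d]; intros Hdet Hfix [Hsmooth [_ Hchart]] Hinv.
  destruct (fixed_zero_inf_diag a b c d) as [-> [-> _]];
    [apply Hfix; now left | apply Hfix; now right |].
  assert (Had : a * d = 1) by (simpl in Hdet; lra).
  assert (Ha2 : a ^ 2 <> 1).
  { intro Ha2; destruct (proj1 (Hfix _) (diag_fixes_one a d Had Ha2)) as [E|E];
      [injection E as E; lra | discriminate]. }
  destruct (vf_invariant_diag a d fx fy Had Hinv) as [Hhom Hfy0].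
  destruct (homogeneous_smooth_linear fx (a ^ 2)) as [k Hk]; try assumption.
  { assert (a <> 0) by (intro; subst a; lra); nra. }
  exists k; split; [exact Hk|intro y].
  destruct (Req_dec y 0) as [->|Hy].
  - assert (d ^ 2 <> 1) by (intro; apply Ha2; nra).
    assert (fy 0 = 0) by nra.
    replace (- (k * 0)) with 0 by ring; assumption.
  - rewrite Hchart, Hk by exact Hy; field; exact Hy.
Qed.

Lemma x_dx_multiple_is_vf (k : R) (fx fy : R -> R) :
  x_dx_multiple k fx fy -> is_vf fx fy.
Proof.
  intros [Hx Hy]; split; [|split].
  - intros n x; apply (ex_derive_n_ext (fun x => k * x ^ 1));
      [intro t; rewrite Hx; ring | apply ex_derive_n_scal_l, ex_derive_n_pow].
  - intros n y; apply (ex_derive_n_ext (fun y => - k * y ^ 1));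
      [intro t; rewrite Hy; ring | apply ex_derive_n_scal_l, ex_derive_n_pow].
  - intros y Hy0; rewrite Hy, Hx; field; exact Hy0.
Qed.

Lemma x_dx_multiple_invariant_diag (k a d : R) (fx fy : R -> R) :
  a * d = 1 -> x_dx_multiple k fx fy -> vf_invariant (a, 0, 0, d) fx fy.
Proof.
  intros Had [Hx Hy].
  assert (Hd : d <> 0) by (intro; subst d; lra).
  assert (Ha : a = / d) by (apply (Rmult_eq_reg_r d); [rewrite Rinv_l|]; assumption).
  subst a; simpl; split; [|split; [|split]].
  - intros x _; rewrite !Hx; field; exact Hd.
  - intros x Hx0; exfalso; apply Hd; lra.
  - intro Hc; exfalso; apply Hc; reflexivity.
  - intros _; rewrite Hy; ring.
Qed.

Lemma x_dx_multiple_invariant_antidiag (k b c : R) (fx fy : R -> R) :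
  b * c = -1 -> x_dx_multiple k fx fy -> vf_invariant (0, b, c, 0) fx fy -> k = 0.
Proof.
  intros Hbc [Hx _] [Hinv _].
  assert (Hc : c <> 0) by (intro; subst c; lra).
  specialize (Hinv 1); rewrite !Hx in Hinv.
  replace (c * 1 + 0) with c in Hinv by ring.
  assert (E : k * (b * c) = k).
  { replace (k * (b * c)) with (k * ((0 * 1 + b) / c) * c ^ 2) by (field; exact Hc).
    rewrite (Hinv Hc); field; exact Hc. }
  nra.
Qed.

Lemma zero_inf_fixed_x_dx_multiple_invariant (m : mat) (k : R) (fx fy : R -> R) :
  det1 m -> fixed m (Some 0) -> fixed m None ->
  x_dx_multiple k fx fy -> vf_invariant m fx fy.
Proof.
  destruct m as [[[a b] c] d]; intros Hdet H0 Hinf.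
  destruct (fixed_zero_inf_diag a b c d H0 Hinf) as [-> [-> _]].
  apply x_dx_multiple_invariant_diag; simpl in Hdet; lra.
Qed.

Lemma swap_zero_inf_x_dx_multiple_0 (m : mat) (k : R) (fx fy : R -> R) :
  det1 m -> act m (Some 0) = None -> act m None = Some 0 ->
  x_dx_multiple k fx fy -> vf_invariant m fx fy -> k = 0.
Proof.
  destruct m as [[[a b] c] d]; intros Hdet E0 Einf.
  destruct (swap_zero_inf_antidiag a b c d E0 Einf) as [-> [-> _]].
  apply x_dx_multiple_invariant_antidiag; simpl in Hdet; lra.
Qed.

Lemma vf_invariant_zero (m : mat) (fx fy : R -> R) :
  (forall x, fx x = 0) -> (forall y, fy y = 0) -> vf_invariant m fx fy.
Proof.
  destruct m as [[[a b] c] d]; intros Hx Hy.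
  simpl; repeat split; intros; rewrite ?Hx, ?Hy; unfold Rdiv; ring.
Qed.

Lemma identity_not_hyperbolic (m : mat) : is_identity m -> ~ hyperbolic m.
Proof.
  intros Hid [p [q [Hpq Hfix]]].
  destruct (proj1 (Hfix (Some 0)) (Hid _)), (proj1 (Hfix (Some 1)) (Hid _)),
    (proj1 (Hfix (Some 2)) (Hid _)); subst;
    repeat match goal with E : Some _ = Some _ |- _ => injection E as E end; lra.
Qed.

Lemma elliptic_not_hyperbolic (m : mat) : elliptic m -> ~ hyperbolic m.
Proof. intros Hell [p [q [_ Hfix]]]; apply (Hell p), Hfix; now left. Qed.

Section ZeroInfGroup.

Variable H : mat -> Prop.
Hypothesis H_kinds : forall h, H h ->
  is_identity h
  \/ (hyperbolic h /\ forall p, fixed h p <-> zero_inf p)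
  \/ (elliptic h /\ forall p, zero_inf p -> zero_inf (act h p)).

Lemma hyperbolic_fixed_zero_inf (h : mat) :
  H h -> hyperbolic h -> forall p, fixed h p <-> zero_inf p.
Proof.
  intros Hh Hhyp; destruct (H_kinds h Hh) as [Hid|[[_ Hfix]|[Hell _]]].
  - contradiction (identity_not_hyperbolic h Hid Hhyp).
  - exact Hfix.
  - contradiction (elliptic_not_hyperbolic h Hell Hhyp).
Qed.

Lemma nonelliptic_fixed_zero_inf (h : mat) :
  (~ exists e, H e /\ elliptic e) -> H h -> forall p, zero_inf p -> fixed h p.
Proof.
  intros Hnell Hh p Hp; destruct (H_kinds h Hh) as [Hid|[[_ Hfix]|[Hell _]]].
  - apply Hid.
  - apply Hfix, Hp.
  - exfalso; apply Hnell; exists h; split; assumption.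
Qed.

Lemma elliptic_swap_zero_inf (e : mat) :
  H e -> elliptic e -> act e (Some 0) = None /\ act e None = Some 0.
Proof.
  intros He Hell; destruct (H_kinds e He) as [Hid|[[Hhyp _]|[_ Hstab]]].
  - contradiction (Hell (Some 0) (Hid _)).
  - contradiction (elliptic_not_hyperbolic e Hell Hhyp).
  - destruct (Hstab (Some 0)) as [E0|E0]; [now left | contradiction (Hell _ E0) |].
    destruct (Hstab None) as [E1|E1]; [now right | | contradiction (Hell _ E1)].
    split; assumption.
Qed.

End ZeroInfGroup.

Theorem lemma3p15 :
  (forall (m : mat) (fx fy : R -> R),
     det1 m -> hyperbolic m -> (forall p, fixed m p <-> zero_inf p) ->
     is_vf fx fy -> vf_invariant m fx fy ->
     exists k : R, (forall x, fx x = k * x) /\ (forall y, fy y = - (k * y)))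
  /\
  (forall H : mat -> Prop,
     subgroup H ->
     (exists h, H h /\ hyperbolic h) ->
     (forall h, H h ->
        is_identity h
        \/ (hyperbolic h /\ forall p, fixed h p <-> zero_inf p)
        \/ (elliptic h /\ forall p, zero_inf p -> zero_inf (act h p))) ->
     ((~ exists h, H h /\ elliptic h) ->
        forall fx fy : R -> R,
          (is_vf fx fy /\ forall h, H h -> vf_invariant h fx fy) <->
          exists k : R, (forall x, fx x = k * x) /\ (forall y, fy y = - (k * y)))
     /\
     ((exists h, H h /\ elliptic h) ->
        forall fx fy : R -> R,
          (is_vf fx fy /\ forall h, H h -> vf_invariant h fx fy) <->
          ((forall x, fx x = 0) /\ (forall y, fy y = 0)))).
Proof.
  split.
  { intros m fx fy Hdet _ Hfix; apply zero_inf_fixed_x_dx_multiple; assumption. }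
  intros H [Hdet _] [h0 [Hh0 Hhyp0]] Hkinds.
  pose proof (hyperbolic_fixed_zero_inf H Hkinds h0 Hh0 Hhyp0) as Hfix0.
  split.
  - intros Hnell fx fy; split.
    + intros [Hvf Hinv].
      exact (zero_inf_fixed_x_dx_multiple h0 fx fy (Hdet _ Hh0) Hfix0 Hvf (Hinv _ Hh0)).
    + intros [k Hk]; split; [exact (x_dx_multiple_is_vf k fx fy Hk)|].
      intros h Hh; pose proof (nonelliptic_fixed_zero_inf H Hkinds h Hnell Hh) as Hfix.
      apply (zero_inf_fixed_x_dx_multiple_invariant h k); auto; apply Hfix; [now left | now right].
  - intros [e [He Hell]] fx fy; split.
    + intros [Hvf Hinv].
      destruct (zero_inf_fixed_x_dx_multiple h0 fx fy (Hdet _ Hh0) Hfix0 Hvf (Hinv _ Hh0)) as [k Hk].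
      destruct (elliptic_swap_zero_inf H Hkinds e He Hell) as [E0 Einf].
      pose proof (swap_zero_inf_x_dx_multiple_0 e k fx fy (Hdet _ He) E0 Einf Hk (Hinv _ He)).
      subst k; destruct Hk as [Hx Hy]; split; intro; [rewrite Hx | rewrite Hy]; ring.
    + intros [Hx Hy].
      assert (Hk : x_dx_multiple 0 fx fy) by (split; intro; [rewrite Hx | rewrite Hy]; ring).
      split; [exact (x_dx_multiple_is_vf 0 fx fy Hk)|].
      intros h _; exact (vf_invariant_zero h fx fy Hx Hy).
Qed.
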